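(* Let $i,k\ge 3$ be integers and put $r=\lfloor (L_i-1)/F_k\rfloor$. Then $$g_0(L_i,L_{i+2},L_{i+k})=\begin{cases}(L_i-1)L_{i+2}-L_i(rF_{k-2}+1) & \text{if } r=0, \text{ or } r\ge 1 \text{ and } (L_i-rF_k)L_{i+2}>F_{k-2}L_i,\\ (rF_k-1)L_{i+2}-L_i\bigl((r-1)F_{k-2}+1\bigr) & \text{otherwise.}\end{cases}$$
   Context: Fibonacci numbers: $F_0=0$, $F_1=1$, $F_n=F_{n-1}+F_{n-2}$. Lucas numbers: $L_0=2$, $L_1=1$, $L_n=L_{n-1}+L_{n-2}$. For positive integers $a_1,\dots,a_l$ with $\gcd(a_1,\dots,a_l)=1$ and an integer $n$, let $d(n;a_1,\dots,a_l)$ be the number of tuples $(x_1,\dots,x_l)$ of nonnegative integers with $a_1x_1+\dots+a_lx_l=n$. For a nonnegative integer $p$, the $p$-Frobenius number $g_p(a_1,\dots,a_l)$ is the largest integer $n$ with $d(n;a_1,\dots,a_l)\le p$ (so $g_0$ is the classical Frobenius number). *)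

From mathcomp Require Import all_boot all_order all_algebra.
Set Implicit Arguments. Unset Strict Implicit. Unset Printing Implicit Defensive.
Import Order.TTheory GRing.Theory Num.Theory.

Fixpoint fib (n : nat) : nat :=
  match n with
  | 0 => 0
  | 1 => 1
  | (m.+1 as n').+1 => fib n' + fib m
  end.

Fixpoint lucas (n : nat) : nat :=
  match n with
  | 0 => 2
  | 1 => 1
  | (m.+1 as n').+1 => lucas n' + lucas m
  end.

(* nsols s n = number of tuples (x_1,...,x_l) of nonnegative integers with
   a_1 x_1 + ... + a_l x_l = n, where s = [:: a_1; ...; a_l] are positive.
   Computed by enumerating x_1 (which satisfies a_1 x_1 <= n, so x_1 <= n
   since a_1 >= 1). *)
Fixpoint nsols (s : seq nat) (n : nat) : nat :=
  match s with
  | [::] => (n == 0)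
  | a :: s' => \sum_(x < n.+1 | a * x <= n) nsols s' (n - a * x)
  end.

Definition dcount (s : seq nat) (n : int) : nat :=
  match n with
  | Posz m => nsols s m
  | Negz _ => 0
  end.

Definition is_pFrobenius (p : nat) (s : seq nat) (g : int) : Prop :=
  (dcount s g <= p)%N /\ (forall n : int, (g < n)%R -> (p < dcount s n)%N).

From mathcomp Require Import all_boot all_order all_algebra zify ring.
Import Order.TTheory GRing.Theory Num.Theory.

(* Put a = L_i, b = L_(i+2), c = L_(i+k), F = F_k and G = F_(k-2), so that
   c + G a = F b.  Writing t = q F + s with s < F, the number s b + q c is the
   least element of the semigroup <a, b, c> congruent to t b modulo a: any
   representation x a + y b + z c of that class has y + z F = t (mod a), and
   when y + z F exceeds t the bound b >= 2 a makes the value larger still.  As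
   b is invertible modulo a, these least elements for t < a cover all residues,
   so g_0 is their maximum minus a.  Within a block of F consecutive t the
   maximum is at the end of the block and it grows from block to block, so the
   overall maximum is at t = L_i - 1 or at the end t = r F - 1 of the previous
   block; comparing these two values gives the case distinction. *)

Lemma nsols_cons_gt0 a s n : 0 < a ->
  (0 < nsols (a :: s) n) <-> exists2 x, x * a <= n & 0 < nsols s (n - x * a).
Proof.
move=> a_gt0 /=; rewrite lt0n sum_nat_eq0; split.
  by case/forallPn=> x; rewrite negb_imply -lt0n mulnC => /andP[]; exists x.
move=> [x le_xa_n sols_gt0]; apply/forallPn.
have x_lt : x < n.+1 by nia.
by exists (Ordinal x_lt); rewrite /= mulnC le_xa_n -lt0n.
Qed.

Lemma nsols3_gt0 a b c n : 0 < a -> 0 < b -> 0 < c ->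
  (0 < nsols [:: a; b; c] n) <-> exists x y z, x * a + y * b + z * c = n.
Proof.
move=> a_gt0 b_gt0 c_gt0; rewrite nsols_cons_gt0 //; split.
  case=> x le_x /(nsols_cons_gt0 _ _ _ b_gt0) [y le_y].
  case/(nsols_cons_gt0 _ _ _ c_gt0) => z le_z.
  by rewrite /= lt0n eqb0 negbK => /eqP ?; exists x, y, z; lia.
case=> x [y [z <-]]; exists x; first lia.
apply/(nsols_cons_gt0 _ _ _ b_gt0); exists y; first lia.
apply/(nsols_cons_gt0 _ _ _ c_gt0); exists z; first lia.
by rewrite /= (_ : _ - _ = 0) //; lia.
Qed.


Lemma lucasSS n : lucas n.+2 = lucas n.+1 + lucas n. Proof. by []. Qed.
Lemma fibSS n : fib n.+2 = fib n.+1 + fib n. Proof. by []. Qed.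

Lemma lucas_gt0 n : 0 < lucas n.
Proof. by elim: n => [|[|n] IHn] //; rewrite lucasSS addn_gt0 IHn. Qed.

Lemma fib_gt0 n : 0 < n -> 0 < fib n.
Proof. by case: n => // n _; elim: n => [|[|n] IHn] //; rewrite fibSS addn_gt0 IHn. Qed.

Lemma fib_sub2_le n : fib (n - 2) <= fib n.
Proof. by case: n => [|[|n]] //; rewrite subn2 fibSS leq_addl. Qed.

Lemma lucas_add2_double n : 0 < n -> 2 * lucas n <= lucas (n + 2).
Proof. by case: n => // n _; rewrite addn2 !lucasSS; lia. Qed.

Lemma coprime_lucasS n : coprime (lucas n) (lucas n.+1).
Proof. by elim: n => // n IHn; rewrite /coprime lucasSS gcdnDl gcdnC. Qed.

Lemma coprime_lucas_add2 n : coprime (lucas n) (lucas (n + 2)).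
Proof. by rewrite /coprime addn2 lucasSS gcdnDr; apply: coprime_lucasS. Qed.

Lemma lucas_add_fib i k : 2 <= k ->
  lucas (i + k) + fib (k - 2) * lucas i = fib k * lucas (i + 2).
Proof.
case: k => [|[|k]] // _; rewrite subn2.
suff: lucas (i + k.+2) + fib k * lucas i = fib k.+2 * lucas (i + 2) /\
      lucas (i + k.+3) + fib k.+1 * lucas i = fib k.+3 * lucas (i + 2) by case.
elim: k => [|k [IHk IHk1]].
  by rewrite !addnS addn0 !lucasSS /=; lia.
have eL : lucas (i + k.+4) = lucas (i + k.+3) + lucas (i + k.+2) by rewrite !addnS.
have eF2 : fib k.+2 * lucas i = fib k.+1 * lucas i + fib k * lucas i.
  by rewrite fibSS mulnDl.
have eF4 : fib k.+4 * lucas (i + 2) = fib k.+3 * lucas (i + 2) + fib k.+2 * lucas (i + 2).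
  by rewrite fibSS mulnDl.
by split=> //; rewrite eL eF2 eF4; lia.
Qed.

Section AperySet.

Variables a b c F G : nat.
Hypotheses (a_gt0 : 0 < a) (F_gt0 : 0 < F) (le_GF : G <= F)
  (le_2a_b : 2 * a <= b) (coprime_ab : coprime a b) (cE : c + G * a = F * b).

(* [apery t] is the least element of the semigroup generated by [a], [b], [c]
   that is congruent to [t * b] modulo [a] (see [apery_minimal]). *)
Definition apery t := t %% F * b + t %/ F * c.

Lemma apery_le_comb_eq T y z : y + z * F = T -> apery T <= y * b + z * c.
Proof.
move=> yzE; have le_zq : z <= T %/ F by rewrite leq_divRL // -yzE leq_addl.
have [d qE] : exists d, T %/ F = z + d by exists (T %/ F - z); lia.
have yE : y = d * F + T %% F by move: yzE; rewrite {1}(divn_eq T F) qE mulnDl; lia.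
have : d * c <= d * (F * b) by rewrite leq_mul2l -cE leq_addr orbT.
rewrite /apery qE yE; nia.
Qed.

(* F (y b + z c) >= (y + z F) c >= (T + a) c >= F (apery T), the last step
   because (s + a) G <= 2 a F <= F b for the remainder s < a of T. *)
Lemma apery_le_comb_ge T y z : T < a -> T + a <= y + z * F -> apery T <= y * b + z * c.
Proof.
move=> lt_Ta le_u; rewrite -(leq_pmul2l F_gt0).
have le_c : c <= F * b by rewrite -cE leq_addr.
have le_rhs : (T + a) * c <= F * (y * b + z * c).
  have := leq_mul (leqnn y) le_c; have := leq_mul le_u (leqnn c); nia.
apply: leq_trans le_rhs; rewrite /apery.
move: (T %/ F) (T %% F) (divn_eq T F) (leq_mod T F) => q s TE le_sT.
have le_sa : (s + a) * G * a <= F * b * a.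
  by rewrite leq_mul2r; apply/orP; right; rewrite mulnC leq_mul //; lia.
have cE' : (s + a) * c + (s + a) * G * a = (s + a) * (F * b) by rewrite -cE; ring.
rewrite TE; nia.
Qed.

Lemma apery_le_block_end t : apery t <= F.-1 * b + t %/ F * c.
Proof. by rewrite leq_add2r leq_mul2r -ltnS prednK // ltn_pmod // orbT. Qed.

Lemma apery_block_end q : apery (q * F + F.-1) = F.-1 * b + q * c.
Proof.
have lt_F : F.-1 < F by rewrite prednK.
by rewrite /apery modnMDl modn_small // divnMDl // divn_small // addn0.
Qed.

Lemma apery_le_same_block t t' : t <= t' -> t %/ F = t' %/ F -> apery t <= apery t'.
Proof.
move=> le_tt' qE; rewrite /apery qE leq_add2r leq_mul2r; apply/orP; right.
by move: le_tt'; rewrite {1}(divn_eq t F) {1}(divn_eq t' F) qE leq_add2l.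
Qed.

Let r := (a - 1) %/ F.
Let prev := r.-1 * F + F.-1.

Lemma prev_lt : 0 < r -> prev < a.
Proof.
move=> r_gt0; have : r * F <= a - 1 by apply: leq_divM.
by rewrite /prev -(prednK F_gt0) -(prednK r_gt0) /=; lia.
Qed.

Lemma apery_le_last t : t < a -> t %/ F = r -> apery t <= apery (a - 1).
Proof. by move=> lt_ta; apply: apery_le_same_block; lia. Qed.

Lemma quot_lt_r t : t < a -> t %/ F != r -> t %/ F < r.
Proof. by move=> lt_ta ne_qr; rewrite ltn_neqAle ne_qr; apply: leq_div2r; lia. Qed.

Lemma apery_le_prev t : t < a -> t %/ F != r -> apery t <= apery prev.
Proof.
move=> lt_ta ne_qr; have lt_qr := quot_lt_r t lt_ta ne_qr.
apply: leq_trans (apery_le_block_end t) _.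
rewrite /prev apery_block_end leq_add2l leq_mul2r -ltnS prednK ?lt_qr ?orbT //.
exact: leq_ltn_trans (leq0n _) lt_qr.
Qed.

Local Open Scope ring_scope.

Lemma c_intE : c%:Z = F%:Z * b%:Z - G%:Z * a%:Z.
Proof. by rewrite -!PoszM -cE PoszD addrK. Qed.

Lemma aperyE t : (apery t)%:Z = t%:Z * b%:Z - (t %/ F)%:Z * G%:Z * a%:Z.
Proof.
rewrite /apery; move: (t %/ F)%N (t %% F)%N (divn_eq t F) => q s ->.
by rewrite !(PoszD, PoszM) c_intE; ring.
Qed.

Lemma apery_last_intE :
  (apery (a - 1)%N)%:Z - a%:Z = (a%:Z - 1) * b%:Z - a%:Z * (r%:Z * G%:Z + 1).
Proof.
rewrite aperyE -/r; have -> : (a - 1)%N%:Z = a%:Z - 1 by lia.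
by ring.
Qed.

Lemma apery_prev_intE : (0 < r)%N ->
  (apery prev)%:Z - a%:Z = (r%:Z * F%:Z - 1) * b%:Z - a%:Z * ((r%:Z - 1) * G%:Z + 1).
Proof.
move=> r_gt0; rewrite /prev apery_block_end PoszD !PoszM c_intE.
have -> : F.-1%:Z = F%:Z - 1 by lia.
have -> : r.-1%:Z = r%:Z - 1 by lia.
by ring.
Qed.

Lemma apery_prev_lt_last : (0 < r)%N ->
  (apery prev < apery (a - 1)%N)%N = (G%:Z * a%:Z < (a%:Z - r%:Z * F%:Z) * b%:Z).
Proof.
move=> r_gt0; rewrite -ltz_nat -subr_gt0 -[RHS]subr_gt0.
have -> : (apery (a - 1)%N)%:Z - (apery prev)%:Z =
    ((apery (a - 1)%N)%:Z - a%:Z) - ((apery prev)%:Z - a%:Z) by ring.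
by rewrite apery_last_intE apery_prev_intE //; congr (0 < _); ring.
Qed.

(* [u = y + z * F] is congruent to [T] modulo [a], because [c] is congruent
   to [F * b] and [b] is invertible modulo [a]. *)
Lemma apery_minimal T x y z (e : int) : (T < a)%N ->
  (x * a + y * b + z * c)%N%:Z = (apery T)%:Z + a%:Z * e -> 0 <= e.
Proof.
move=> lt_Ta nE; set u := (y + z * F)%N.
have uE : (u%:Z - T%:Z) * b%:Z = (e - x%:Z + (z * G)%N%:Z - (T %/ F * G)%N%:Z) * a%:Z.
  have n_eq : (x * a + y * b + z * c + z * G * a = x * a + u * b)%N.
    by have := congr1 (muln z) cE; rewrite /u; lia.
  move: (congr1 Posz n_eq) nE (aperyE T); rewrite !(PoszD, PoszM); lia.
have /dvdzP [f fE] : (a %| u%:Z - T%:Z)%Z.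
  by rewrite -(@Gauss_dvdzl _ _ b%:Z) ?coprimezE // uE dvdz_mull.
have apery_le : (apery T <= x * a + y * b + z * c)%N.
  rewrite -addnA; apply: leq_trans (leq_addl _ _).
  have [f_lt0 | f_gt0 | f_eq0] := ltrgtP f 0.
  - have : f * a%:Z <= - a%:Z by rewrite -mulN1r ler_pM2r ?ltz_nat //; lia.
    lia.
  - apply: apery_le_comb_ge => //; have : a%:Z <= f * a%:Z by nia.
    lia.
  - by apply: apery_le_comb_eq; apply/eqP; rewrite -eqz_nat -subr_eq0 fE f_eq0 mul0r.
have : 0 <= a%:Z * e by lia.
by rewrite pmulr_rge0 // ltz_nat.
Qed.

Lemma apery_decomposition (n : int) :
  exists2 t, (t < a)%N & exists w, n = (apery t)%:Z + a%:Z * w.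
Proof.
have /coprimezP [[p q] /= pqE] : coprimez a b by rewrite coprimezE.
have a_neq0 : a%:Z != 0 by rewrite eqz_nat -lt0n.
set t := `|((n * q) %% a)%Z|%N.
have tE : t%:Z = n * q - ((n * q) %/ a)%Z * a%:Z.
  by rewrite gez0_abs ?modz_ge0 // {2}(divz_eq (n * q) a) addrC addKr.
exists t; first by rewrite -ltz_nat gez0_abs ?modz_ge0 ?ltz_pmod ?ltz_nat.
exists (n * p + ((n * q) %/ a)%Z * b%:Z + (t %/ F * G)%N%:Z).
rewrite aperyE tE PoszM.
by transitivity (n * (p * a%:Z + q * b%:Z)); [rewrite pqE mulr1 | ring].
Qed.

Lemma pFrobenius0_apery_max T : (T < a)%N ->
  (forall t, t < a -> apery t <= apery T)%N ->
  is_pFrobenius 0 [:: a; b; c] ((apery T)%:Z - a%:Z).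
Proof.
move=> lt_Ta apery_max.
have b_gt0 : (0 < b)%N by lia.
have c_gt0 : (0 < c)%N by nia.
split.
  case gE: (_ - _) => [m|] //=; rewrite leqn0 eqn0Ngt; apply/negP.
  case/nsols3_gt0=> // x [y [z nE]].
  suff : 0 <= -1 :> int by [].
  by apply: (apery_minimal T x y z (-1) lt_Ta); rewrite nE -gE; ring.
move=> n lt_gn; have [t lt_ta [w nE]] := apery_decomposition n.
have w_ge0 : 0 <= w.
  have := apery_max t lt_ta; rewrite -lez_nat => le_t.
  have : - a%:Z < a%:Z * w by lia.
  nia.
rewrite nE -(gez0_abs w_ge0) -PoszM -PoszD /=.
apply/nsols3_gt0 => //.
by exists `|w|%N, (t %% F)%N, (t %/ F)%N; rewrite /apery; ring.
Qed.

Theorem pFrobenius0_formula :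
  let r : nat := ((a - 1) %/ F)%N in
  is_pFrobenius 0 [:: a; b; c]
    (if (r == 0%N) || ((1 <= r)%N && (G%:Z * a%:Z < (a%:Z - r%:Z * F%:Z) * b%:Z))
     then (a%:Z - 1) * b%:Z - a%:Z * (r%:Z * G%:Z + 1)
     else (r%:Z * F%:Z - 1) * b%:Z - a%:Z * ((r%:Z - 1) * G%:Z + 1)).
Proof.
cbv zeta; rewrite -/r; case: ifP => [cond | ncond].
  rewrite -apery_last_intE; apply: pFrobenius0_apery_max => [|t lt_ta]; first lia.
  have [/(apery_le_last t lt_ta) // | ne_qr] := eqVneq (t %/ F)%N r.
  apply: leq_trans (apery_le_prev t lt_ta ne_qr) (ltnW _).
  have r_gt0 : (0 < r)%N := leq_ltn_trans (leq0n _) (quot_lt_r t lt_ta ne_qr).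
  by rewrite apery_prev_lt_last //; move: cond; rewrite (gtn_eqF r_gt0) r_gt0.
have [r0 | r_gt0] := posnP r; first by rewrite r0 in ncond.
move: ncond; rewrite (gtn_eqF r_gt0) r_gt0 /= => not_lt.
rewrite -apery_prev_intE //.
apply: pFrobenius0_apery_max (prev_lt r_gt0) _ => t lt_ta.
have [qE | ne_qr] := eqVneq (t %/ F)%N r; last exact: apery_le_prev.
apply: leq_trans (apery_le_last t lt_ta qE) _.
by rewrite leqNgt apery_prev_lt_last // not_lt.
Qed.

End AperySet.

Local Open Scope ring_scope.

Theorem theorem1 (i k : nat) (hi : (3 <= i)%N) (hk : (3 <= k)%N) :
  let Li : int := (lucas i)%:Z in
  let Li2 : int := (lucas (i + 2))%:Z in
  let r : nat := ((lucas i - 1) %/ fib k)%N in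
  let Fk : int := (fib k)%:Z in
  let Fk2 : int := (fib (k - 2))%:Z in
  is_pFrobenius 0 [:: lucas i; lucas (i + 2); lucas (i + k)]
    (if (r == 0%N) || ((1 <= r)%N && (Fk2 * Li < (Li - r%:Z * Fk) * Li2))
     then (Li - 1) * Li2 - Li * (r%:Z * Fk2 + 1)
     else (r%:Z * Fk - 1) * Li2 - Li * ((r%:Z - 1) * Fk2 + 1)).
Proof.
apply: pFrobenius0_formula.
- exact: lucas_gt0.
- by apply: fib_gt0; lia.
- exact: fib_sub2_le.
- by apply: lucas_add2_double; lia.
- exact: coprime_lucas_add2.
- by apply: lucas_add_fib; lia.
Qed.
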